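(* Let $V=(\mathbb{F}_2)^r$, $W=(\mathbb{F}_2)^s$ with $s>r$, let $\alpha:V\to W$ be injective, and let $\sigma\in\mathrm{Sym}(V)$ be linearly extendible via $\alpha$. Let $T=\langle\alpha(V)\rangle$ and let $\sigma':W\to W$ be defined as follows: for $t\in T$ written as $t=\sum_{j=1}^{\iota}\alpha(v^j)$ with $v^j\in V$, set $\sigma'(t)=\sum_{j=1}^{\iota}\alpha(\sigma(v^j))$; fix a subset $B$ of the standard basis $\{\mathbf e_1,\dots,\mathbf e_s\}$ of $W$ with $|B|=s-\dim T$ and $W=T\oplus\langle B\rangle$, and for $w=w_T+w_B$ with $w_T\in T$, $w_B\in\langle B\rangle$ set $\sigma'(w)=\sigma'(w_T)+w_B$. Then $\sigma'$ is well defined and $\sigma'\in\mathrm{GL}(W)$.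
   Context: For $\sigma\in\mathrm{Sym}(V)$ and injective $\alpha:V\to W$, $\sigma$ is called linearly extendible via $\alpha$ if for every finite family $\{v^i\}_{i\in I}\subset V$ one has $\sum_{i\in I}\alpha(v^i)=0\iff\sum_{i\in I}\alpha(\sigma(v^i))=0$. *)

From HB Require Import structures.
From mathcomp Require Import all_boot all_order all_algebra all_fingroup.
Set Implicit Arguments. Unset Strict Implicit. Unset Printing Implicit Defensive.
Import GRing.Theory.
Local Open Scope ring_scope.

Notation Vr r := 'rV['F_2]_r.

Definition lin_extendible (r s : nat) (sigma : {perm Vr r})
  (alpha : Vr r -> Vr s) : Prop :=
  forall vs : seq (Vr r),
    \sum_(v <- vs) alpha v = 0 <-> \sum_(v <- vs) alpha (sigma v) = 0.

Definition spanT (r s : nat) (alpha : Vr r -> Vr s) : {vspace Vr s} :=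
  <<[seq alpha v | v <- enum (Vr r)]>>%VS.

Definition stdvec (s : nat) (i : 'I_s) : Vr s := delta_mx 0 i.

Definition spanB (s : nat) (B : {set 'I_s}) : {vspace Vr s} :=
  <<[seq stdvec i | i <- enum B]>>%VS.

From HB Require Import structures.
From mathcomp Require Import all_boot all_order all_algebra all_fingroup.
Import GRing.Theory.
Set Implicit Arguments.
Unset Strict Implicit.

Local Open Scope ring_scope.

(* Over F_2 every linear combination of alpha(V) is a plain sum of a sub-list of
   alpha(V), so linear extendibility says exactly that the families alpha(v) and
   alpha(sigma v) satisfy the same linear relations.  Hence the map sending
   sum_i c_i alpha(v_i) to sum_i c_i alpha(sigma v_i) is a well-defined injective
   linear endomorphism of T, and adding the identity on the complement <B> gives
   an injective, hence bijective, linear map of W. *)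

Lemma sum_scaleF2 (V : lmodType 'F_2) (I : finType) (d : I -> 'F_2) (F : I -> V) :
  \sum_i d i *: F i = \sum_(i | d i != 0) F i.
Proof.
rewrite [RHS]big_mkcond; apply: eq_bigr => i _.
case: (d i) => -[|[|k]] Hk //.
- by rewrite (_ : Ordinal Hk = 0) ?scale0r ?eqxx //; apply: val_inj.
- by rewrite (_ : Ordinal Hk = 1) ?scale1r ?oner_neq0 //; apply: val_inj.
Qed.

Section Transfer.

Variables (K : fieldType) (vT : vectType K) (n : nat) (X Y : n.-tuple vT).

Definition transfer (t : vT) : vT := \sum_i coord X i t *: Y`_i.

Fact transfer_is_linear : linear transfer.
Proof.
move=> a u v; rewrite /transfer scaler_sumr -big_split /=.
by apply: eq_bigr => i _; rewrite linearP scalerDl scalerA.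
Qed.

HB.instance Definition _ :=
  GRing.isSemilinear.Build K vT vT _ transfer
    (GRing.semilinear_linear transfer_is_linear).

Lemma transfer_span t : transfer t \in span Y.
Proof.
by apply: rpred_sum => i _; rewrite rpredZ // memv_span // mem_nth ?size_tuple.
Qed.

Hypothesis relXY :
  forall d : 'I_n -> K, \sum_i d i *: X`_i = 0 -> \sum_i d i *: Y`_i = 0.

Lemma transfer_lincomb (d : 'I_n -> K) :
  transfer (\sum_i d i *: X`_i) = \sum_i d i *: Y`_i.
Proof.
set t := \sum_i _; have tX : t \in span X.
  by apply: rpred_sum => i _; rewrite rpredZ // memv_span // mem_nth ?size_tuple.
have: \sum_i (coord X i t - d i) *: X`_i = 0.
  by under eq_bigr do rewrite scalerBl; rewrite sumrB -coord_span // subrr.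
move/relXY; under eq_bigr do rewrite scalerBl.
by rewrite sumrB => /eqP; rewrite subr_eq0 => /eqP.
Qed.

Hypothesis relYX :
  forall d : 'I_n -> K, \sum_i d i *: Y`_i = 0 -> \sum_i d i *: X`_i = 0.

Lemma transfer_eq0 t : t \in span X -> transfer t = 0 -> t = 0.
Proof. by move=> tX /relYX; rewrite -coord_span. Qed.

End Transfer.

Section ComplementExtension.

Variables (K : fieldType) (vT : vectType K) (U W : {vspace vT}).
Variable phi : {linear vT -> vT}.
Hypotheses (dxUW : directv (U + W)) (fullUW : (U + W)%VS = fullv).
Hypotheses (phiU : forall u, u \in U -> phi u \in U)
           (phi_eq0 : forall u, u \in U -> phi u = 0 -> u = 0).

Definition extend_by_id (w : vT) : vT := phi (daddv_pi U W w) + daddv_pi W U w.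

Let capUW : (U :&: W = 0)%VS. Proof. exact/directv_addP. Qed.
Let capWU : (W :&: U = 0)%VS. Proof. by rewrite capvC. Qed.

Let pi_add w : daddv_pi U W w + daddv_pi W U w = w.
Proof. by rewrite daddv_pi_add // fullUW memvf. Qed.

Let piWU_U u : u \in U -> daddv_pi W U u = 0.
Proof.
by move=> Uu; apply: (addrI u); rewrite addr0 -[in RHS](pi_add u) (daddv_pi_id capUW).
Qed.

Let piUW_W w : w \in W -> daddv_pi U W w = 0.
Proof.
by move=> Ww; apply: (addIr w); rewrite add0r -[in RHS](pi_add w) (daddv_pi_id capWU).
Qed.

Fact extend_by_id_is_linear : linear extend_by_id.
Proof. by move=> a u v; rewrite /extend_by_id !linearP /= scalerDr addrACA. Qed.

HB.instance Definition _ :=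
  GRing.isSemilinear.Build K vT vT _ extend_by_id
    (GRing.semilinear_linear extend_by_id_is_linear).

Lemma extend_by_idD u w :
  u \in U -> w \in W -> extend_by_id (u + w) = phi u + w.
Proof.
move=> Uu Ww; rewrite /extend_by_id !linearD /= (piWU_U Uu) (piUW_W Ww).
by rewrite (daddv_pi_id capUW Uu) (daddv_pi_id capWU Ww) linear0 addr0 add0r.
Qed.

Lemma extend_by_id_eq0 z : extend_by_id z = 0 -> z = 0.
Proof.
rewrite /extend_by_id => /eqP; rewrite addr_eq0 => /eqP phi_pUz.
have phi_pUz0 : phi (daddv_pi U W z) = 0.
  apply/eqP; rewrite -memv0 -capUW memv_cap phiU ?memv_pi //.
  by rewrite phi_pUz rpredN memv_pi.
have pUz0 : daddv_pi U W z = 0 by apply: phi_eq0; rewrite ?memv_pi.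
have pWz0 : daddv_pi W U z = 0 by apply/eqP; rewrite -oppr_eq0 -phi_pUz phi_pUz0.
by rewrite -(pi_add z) pUz0 pWz0 addr0.
Qed.

Lemma extend_by_id_inj : injective extend_by_id.
Proof.
move=> u v eq_uv; apply/eqP; rewrite -subr_eq0; apply/eqP/extend_by_id_eq0.
by rewrite linearB /= eq_uv subrr.
Qed.

End ComplementExtension.

Section EnumMap.

Variable r : nat.

Definition enum_map s (f : Vr r -> Vr s) : (size (enum (Vr r))).-tuple (Vr s) :=
  map_tuple f (in_tuple (enum (Vr r))).

Lemma enum_map_lincomb v : exists d : 'I_(size (enum (Vr r))) -> 'F_2,
  forall s (f : Vr r -> Vr s), \sum_i d i *: (enum_map f)`_i = f v.
Proof.
have Ev : (index v (enum (Vr r)) < size (enum (Vr r)))%N.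
  by rewrite index_mem mem_enum.
exists (fun i => (i == Ordinal Ev)%:R) => s f.
rewrite (bigD1 (Ordinal Ev)) //= eqxx scale1r big1 => [|j /negbTE ->].
  by rewrite addr0 (nth_map v) // nth_index ?mem_enum.
by rewrite scale0r.
Qed.

Lemma memv_enum_map s (f : Vr r -> Vr s) v : f v \in span (enum_map f).
Proof. by apply/memv_span/map_f; rewrite mem_enum. Qed.

Lemma lin_extendible_relations s (sigma : {perm Vr r}) (alpha : Vr r -> Vr s) :
  lin_extendible sigma alpha ->
  forall d : 'I_(size (enum (Vr r))) -> 'F_2,
    \sum_i d i *: (enum_map alpha)`_i = 0 <->
    \sum_i d i *: (enum_map (alpha \o sigma))`_i = 0.
Proof.
move=> hsig d; rewrite !sum_scaleF2.
pose vs := [seq (enum (Vr r))`_i | i : 'I_(size (enum (Vr r))) <- enum 'I_(size (enum (Vr r)))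
                                    & d i != 0].
have sub_sum (f : Vr r -> Vr s) :
    \sum_(i | d i != 0) (enum_map f)`_i = \sum_(v <- vs) f v.
  rewrite big_map big_filter big_enum_cond; apply: eq_bigr => i _.
  by rewrite (nth_map 0).
by rewrite !sub_sum; apply: hsig.
Qed.

End EnumMap.

Theorem mainTheorem2 (r s : nat) (hrs : (r < s)%N)
  (alpha : Vr r -> Vr s) (halpha : injective alpha)
  (sigma : {perm Vr r}) (hsig : lin_extendible sigma alpha)
  (B : {set 'I_s})
  (hBcard : #|B| = (s - \dim (spanT alpha))%N)
  (hBdir : directv (spanT alpha + spanB B))
  (hBfull : (spanT alpha + spanB B)%VS = fullv) :
  exists sigma' : Vr s -> Vr s,
    (forall vs : seq (Vr r),
        sigma' (\sum_(v <- vs) alpha v) = \sum_(v <- vs) alpha (sigma v)) /\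
    (forall t b : Vr s, t \in spanT alpha -> b \in spanB B ->
        sigma' (t + b) = sigma' t + b) /\
    linear sigma' /\ bijective sigma'.
Proof.
pose X := enum_map alpha; pose Y := enum_map (alpha \o sigma).
have [relXY relYX] := all_and2 (lin_extendible_relations hsig).
pose phi := transfer X Y.
have phi_alpha v : phi (alpha v) = alpha (sigma v).
  have [d dE] := enum_map_lincomb v.
  by rewrite /phi -(dE _ alpha) transfer_lincomb ?dE.
have phi_sum vs : phi (\sum_(v <- vs) alpha v) = \sum_(v <- vs) alpha (sigma v).
  by rewrite /phi linear_sum; apply: eq_bigr => v _; apply: phi_alpha.
have phiT t : phi t \in spanT alpha.
  apply: subvP (transfer_span X Y t); apply/span_subvP => _ /mapP [v _ ->].
  exact: (memv_enum_map alpha (sigma v)).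
have phi_eq0 t : t \in spanT alpha -> phi t = 0 -> t = 0.
  by move=> tT; apply: (transfer_eq0 relYX).
have sumT vs : \sum_(v <- vs) alpha v \in spanT alpha.
  by apply: rpred_sum => v _; apply: memv_enum_map.
exists (extend_by_id (spanT alpha) (spanB B) phi); split; [|split; [|split]].
- move=> vs; rewrite -[\sum_(v <- _) alpha v]addr0 extend_by_idD ?rpred0 //.
  by rewrite addr0; apply: phi_sum.
- move=> t b Tt Bb; rewrite -[in RHS](addr0 t) !extend_by_idD ?rpred0 //.
  by rewrite addr0.
- exact: extend_by_id_is_linear.
- by apply/injF_bij/extend_by_id_inj.
Qed.
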